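(* Let $\mathcal{S},\mathcal{A}$ be finite nonempty sets, $\lambda\in(0,1)$, $b>0$, $r_{sa}\ge 0$ for all $(s,a)$, let $\bm{\nu}$ be a stationary policy ($\bm{\nu}_s\in\Delta(\mathcal{A})$ for each $s$), and for each $(s,a)$ let $\mathcal{U}_{sa}\subseteq\Delta(\mathcal{S})$ be a nonempty set over which the minima below are attained. Define $\tilde T:\mathbb{R}^{\mathcal{S}}\to\mathbb{R}^{\mathcal{S}}$ by $$\tilde T(\bm{v})_s=\max_{\bm{\pi}_s\in\Delta(\mathcal{A})}\sum_{a\in\mathcal{A}}\pi_{sa}\Big(r_{sa}+\lambda\min_{\bm{p}\in\mathcal{U}_{sa}}\bm{p}^\top\bm{v}\Big)-\frac1b\,\mathrm{KL}(\bm{\pi}_s,\bm{\nu}_s),$$ and $\tilde t:(\mathbb{R}_{>0})^{\mathcal{S}}\to(\mathbb{R}_{>0})^{\mathcal{S}}$ by $\tilde t(\bm{x})_s=\sum_{a}\nu_{sa}\exp(b\,r_{sa})\min_{\bm{p}\in\mathcal{U}_{sa}}\prod_{s'}x_{s'}^{\lambda p_{s'}}$. Let $\tilde{\bm{v}}^\star$ be the unique fixed point of $\tilde T$. Then: (1) $\tilde{\bm{v}}^\star$ is an optimal solution of $\max\{\sum_{s\in\mathcal{S}}\exp(b\,v_s)\;:\;\bm{v}\le\tilde T(\bm{v}),\ \bm{v}\in\mathbb{R}^{\mathcal{S}}\}$. (2) The problem $\max\{\sum_{s\in\mathcal{S}}x_s\;:\;\bm{x}\le\tilde t(\bm{x}),\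 x_s\ge 1\ \forall s\in\mathcal{S}\}$ is a convex program (linear objective maximized over a closed convex set), and $\tilde{\bm{v}}^\star=\log_b(\tilde{\bm{x}}^\star)$ where $\tilde{\bm{x}}^\star$ is an optimal solution of this program and $\log_b(z)=\log(z)/b$ is applied componentwise.
   Context: $\Delta(\mathcal{X})$ is the probability simplex over a finite set $\mathcal{X}$; $\mathrm{KL}(\bm{\pi}_s,\bm{\nu}_s)=\sum_a\pi_{sa}\log(\pi_{sa}/\nu_{sa})$ (with $0\log 0=0$, and $+\infty$ if $\pi_{sa}>0=\nu_{sa}$). Vector inequalities are componentwise. $\tilde T$ is the entropy-regularized robust Bellman operator of an sa-rectangular robust MDP; it is a monotone $\ell_\infty$-contraction with modulus $\lambda$, so it has a unique fixed point. *)

From HB Require Import structures.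
From mathcomp Require Import all_boot all_order all_algebra.
From mathcomp Require Import all_classical all_reals all_analysis.
Set Implicit Arguments. Unset Strict Implicit. Unset Printing Implicit Defensive.
Import Order.TTheory GRing.Theory Num.Theory.
Import numFieldNormedType.Exports.
Local Open Scope classical_set_scope.
Local Open Scope ring_scope.

Section Defs.
Context {R : realType}.

Definition simplex (T : finType) (p : T -> R) : Prop :=
  (forall t, 0 <= p t) /\ \sum_(t : T) p t = 1.

Definition KL (T : finType) (pi nu : T -> R) : \bar R :=
  if [exists a, (0 < pi a) && (nu a == 0)] then +oo%E
  else (\sum_(a : T) (if pi a == 0 then 0 else pi a * ln (pi a / nu a)))%:E.

(** minimum over a set (via infimum; attainment assumed separately) *)
Definition setmin (T : Type) (U : set T) (f : T -> R) : R := inf [set f p | p in U].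

Definition dotp (T : finType) (p v : T -> R) : R := \sum_(t : T) p t * v t.

Definition Ttil (S A : finType) (lam b : R) (r nu : S -> A -> R)
  (U : S -> A -> set (S -> R)) (v : S -> R) (s : S) : R :=
  fine (ereal_sup [set ((\sum_(a : A) pi a * (r s a + lam * setmin (U s a) (fun p => dotp p v)))%:E
                        - (b^-1)%:E * KL pi (nu s))%E | pi in [set pi | simplex pi]]).

Definition ttil (S A : finType) (lam b : R) (r nu : S -> A -> R)
  (U : S -> A -> set (S -> R)) (x : S -> R) (s : S) : R :=
  \sum_(a : A) nu s a * expR (b * r s a) *
     setmin (U s a) (fun p => \prod_(s' : S) powR (x s') (lam * p s')).

End Defs.

From HB Require Import structures.
From mathcomp Require Import all_boot all_order all_algebra.
From mathcomp Require Import all_classical all_reals all_analysis.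
From mathcomp Require Import ring lra.
Import Order.TTheory GRing.Theory Num.Theory.
Import numFieldNormedType.Exports.
Local Open Scope classical_set_scope.
Local Open Scope ring_scope.

(* The Gibbs variational principle solves the inner maximisation over policies in
   closed form: T~(v)_s = ln (sum_a nu_sa exp (b (r_sa + lam min_p p.v))) / b.
   This operator is monotone and T~(v + c) = T~(v) + lam c, so for lam < 1 every
   subsolution v <= T~(v) lies below the fixed point vstar (compare at a state
   where v - vstar is maximal); this gives (1).  The substitution x = exp (b v)
   conjugates T~ to t~, i.e. t~(exp (b v)) = exp (b T~(v)), so every feasible
   point of the multiplicative program is dominated componentwise by
   exp (b vstar), which is itself feasible (vstar >= 0 because 0 is a
   subsolution) and hence the unique maximiser.  The feasible set is convex
   because t~ is concave: the weighted geometric mean prod_s x_s^(lam p_s) is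
   concave as sum_s lam p_s <= 1, and minima and nonnegative combinations
   preserve concavity.  It is closed because on it t~ is a minimum, over
   selections of the p's, of continuous functions. *)

Section RealFacts.
Context {R : realType}.

Lemma ln_le_subr1 (y : R) : 0 < y -> ln y <= y - 1.
Proof. by move=> y0; have := @le_ln1Dx R (y - 1); rewrite addrCA subrr addr0; apply; lra. Qed.

Lemma psumr_wmul_gt0 (I : finType) (w f : I -> R) :
  (forall i, 0 <= w i) -> \sum_i w i != 0 -> (forall i, 0 < f i) ->
  0 < \sum_i w i * f i.
Proof.
move=> w0 /eqP /(psumr_neq0P (fun i _ => w0 i)) [j /= wj0] f0.
rewrite lt_def psumr_neq0 => [|i _]; last by rewrite mulr_ge0 // ltW.
rewrite sumr_ge0 ?andbT => [|i _]; last by rewrite mulr_ge0 // ltW.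
by apply/hasP; exists j; rewrite ?mem_index_enum // mulr_gt0.
Qed.

Lemma eq_of_ler_sum {I : finType} {F G : I -> R} :
  (forall i, F i <= G i) -> \sum_i G i <= \sum_i F i -> forall i, F i = G i.
Proof.
move=> FG GF i; have GF0 j : xpredT j -> 0 <= G j - F j by rewrite subr_ge0.
have sum0 : \sum_j (G j - F j) = 0.
  by apply/eqP; rewrite eq_le sumr_ge0 // andbT sumrB subr_le0.
by apply/eqP; rewrite eq_sym -subr_eq0 (psumr_eq0P GF0 sum0).
Qed.

Lemma simplex_sum_ne0 (T : finType) (p : T -> R) : simplex p -> \sum_t p t != 0.
Proof. by case=> _ ->; exact: oner_neq0. Qed.

Lemma setmin_eq {T : Type} {V : set T} {f : T -> R} {p : T} :
  V p -> (forall q, V q -> f p <= f q) -> setmin V f = f p.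
Proof.
move=> Vp pmin; apply/eqP; rewrite eq_le; apply/andP; split.
  by apply: ge_inf; [exists (f p) => _ [q Vq <-]; exact: pmin | exists p].
by apply: lb_le_inf; [exists (f p), p | move=> _ [q Vq <-]; exact: pmin].
Qed.

Lemma setmin_le {T : Type} {V : set T} {f : T -> R} {p : T} :
  (forall q, V q -> 0 <= f q) -> V p -> setmin V f <= f p.
Proof.
by move=> f0 Vp; apply: ge_inf; [exists 0 => _ [q Vq <-]; exact: f0 | exists p].
Qed.

End RealFacts.

Section Gibbs.
Context {R : realType} {T : finType}.

Lemma gibbs_inequality (pi w : T -> R) :
  simplex pi -> (forall a, 0 <= w a) -> \sum_a w a <= 1 ->
  (forall a, 0 < pi a -> 0 < w a) ->
  \sum_a (if pi a == 0 then 0 else pi a * ln (w a / pi a)) <= 0.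
Proof.
case=> pi0 pi1 w0 w1 wpos.
apply: (@le_trans _ _ (\sum_a (w a - pi a))); last by rewrite sumrB pi1 subr_le0.
apply: ler_sum => a _; case: eqP => [->|/eqP pia]; first by rewrite subr0.
have pia_gt0 : 0 < pi a by rewrite lt_def pia pi0.
have := ler_wpM2l (ltW pia_gt0) (ln_le_subr1 _ (divr_gt0 (wpos a pia_gt0) pia_gt0)).
move=> /le_trans; apply.
by rewrite mulrBr mulr1 mulrCA divff ?mulr1 ?gt_eqF.
Qed.

Variables (b : R) (nu q : T -> R).
Hypotheses (b_gt0 : 0 < b) (nu_simplex : simplex nu).

Let Z := \sum_a nu a * expR (b * q a).

Definition gibbs_weight a := nu a * expR (b * q a) / Z.

Let Z_gt0 : 0 < Z.
Proof.
case: (nu_simplex) => nu0 _.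
by rewrite /Z psumr_wmul_gt0 ?simplex_sum_ne0 // => a; exact: expR_gt0.
Qed.

Lemma gibbs_weight_simplex : simplex gibbs_weight.
Proof.
case: nu_simplex => nu0 _; split => [a|].
  by rewrite divr_ge0 ?mulr_ge0 ?expR_ge0 // ltW.
by rewrite -mulr_suml divff ?gt_eqF.
Qed.

Lemma gibbs_gain (pi : T -> R) :
  simplex pi -> (forall a, 0 < pi a -> 0 < nu a) ->
  b * (\sum_a pi a * q a) - \sum_a (if pi a == 0 then 0 else pi a * ln (pi a / nu a))
  = ln Z + \sum_a (if pi a == 0 then 0 else pi a * ln (gibbs_weight a / pi a)).
Proof.
case=> pi0 pi1 nu_pos.
rewrite mulr_sumr -sumrB -{1}[ln Z]mul1r -pi1 mulr_suml -big_split /=.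
apply: eq_bigr => a _; case: eqP => [->|/eqP pia]; first by rewrite !mul0r mulr0 subr0 addr0.
have pia_gt0 : 0 < pi a by rewrite lt_def pia pi0.
have nua_gt0 := nu_pos a pia_gt0.
rewrite /gibbs_weight !ln_div ?lnM ?expRK ?posrE ?divr_gt0 ?mulr_gt0 ?expR_gt0 //.
ring.
Qed.

Lemma gibbs_variational :
  ereal_sup [set ((\sum_a pi a * q a)%:E - (b^-1)%:E * KL pi nu)%E
            | pi in [set pi | simplex pi]]
  = (ln Z / b)%:E.
Proof.
case: (nu_simplex) => nu0 _.
have abs_cont (pi : T -> R) : ~~ [exists a, (0 < pi a) && (nu a == 0)] ->
    forall a, 0 < pi a -> 0 < nu a.
  by move=> /existsPn ac a pia; move: (ac a); rewrite pia /= lt_def nu0 andbT.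
have value (pi : T -> R) : simplex pi -> ~~ [exists a, (0 < pi a) && (nu a == 0)] ->
    ((\sum_a pi a * q a)%:E - (b^-1)%:E * KL pi nu)%E
    = ((ln Z + \sum_a (if pi a == 0 then 0 else pi a * ln (gibbs_weight a / pi a))) / b)%:E.
  move=> pi_simplex ac; rewrite /KL ifN // -EFinM -EFinB -gibbs_gain //; last exact: abs_cont.
  by congr (_%:E); field; rewrite gt_eqF.
apply/eqP; rewrite eq_le; apply/andP; split.
  apply: ge_ereal_sup => _ [pi pi_simplex <-].
  have [nac|ac] := boolP [exists a, (0 < pi a) && (nu a == 0)].
    by rewrite /KL nac mulry gtr0_sg ?invr_gt0 // mul1e addeNy leNye.
  rewrite value // lee_fin ler_pM2r ?invr_gt0 // gerDl.
  have [g0 g1] := gibbs_weight_simplex.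
  apply: gibbs_inequality => //; first by rewrite g1.
  move=> a /(abs_cont _ ac) nua_gt0.
  by rewrite divr_gt0 ?mulr_gt0 ?expR_gt0.
apply: ereal_sup_ubound; exists gibbs_weight; first exact: gibbs_weight_simplex.
rewrite value; last 2 first.
- exact: gibbs_weight_simplex.
- apply/existsPn => a; rewrite /gibbs_weight.
  by case: eqP => [->|_]; rewrite ?andbF // !mul0r ltxx.
by rewrite big1 ?addr0 // => a _; case: ifPn => // ga; rewrite divff // ln1 mulr0.
Qed.

End Gibbs.

Section Comparison.
Context {R : realDomainType} {S : finType} (F : (S -> R) -> S -> R) (lam : R).
Hypotheses (F_mono : forall v w, (forall s, v s <= w s) -> forall s, F v s <= F w s)
  (F_shift : forall v c s, F (fun s => v s + c) s = F v s + lam * c)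
  (lam_lt1 : lam < 1).

Lemma subsolution_le_fixpoint (vstar v : S -> R) :
  (forall s, F vstar s = vstar s) -> (forall s, v s <= F v s) ->
  forall s, v s <= vstar s.
Proof.
move=> vstar_fix v_sub s.
have [sm _ sm_max] := @arg_maxP _ _ _ s xpredT (fun s => v s - vstar s) isT.
set c := v sm - vstar sm in sm_max.
suff c_le0 : c <= 0 by have := sm_max s isT; rewrite /=; lra.
have v_le s' : v s' <= vstar s' + c by have := sm_max s' isT; rewrite /=; lra.
have := le_trans (v_sub sm) (F_mono _ _ v_le sm).
rewrite F_shift vstar_fix -/c => h.
have : (1 - lam) * c <= 0 by rewrite mulrBl mul1r subr_le0; move: h; rewrite /c; lra.
by rewrite pmulr_rle0 // subr_gt0.
Qed.

End Comparison.

Section GeometricMean.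
Context {R : realType} {S : finType}.
Implicit Types (w x y : S -> R).

Definition geomean w x : R := \prod_s powR (x s) (w s).

Lemma geomeanE w x : (forall s, 0 < x s) -> geomean w x = expR (\sum_s w s * ln (x s)).
Proof. by move=> x0; rewrite expR_sum; apply: eq_bigr => s _; rewrite /powR gt_eqF. Qed.

Lemma geomean_ge0 w x : 0 <= geomean w x.
Proof. by apply: prodr_ge0 => s _; exact: powR_ge0. Qed.

Lemma geomeanM w x y : (forall s, 0 <= x s) -> (forall s, 0 <= y s) ->
  geomean w (fun s => x s * y s) = geomean w x * geomean w y.
Proof. by move=> x0 y0; rewrite -big_split; apply: eq_bigr => s _; rewrite powRM. Qed.

Lemma geomean_le_amean w x : (forall s, 0 <= w s) -> \sum_s w s <= 1 ->
  (forall s, 0 < x s) -> geomean w x <= \sum_s w s * x s + (1 - \sum_s w s).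
Proof.
move=> w0 w1 x0; set W := \sum_s w s in w1 *; set M := _ + (1 - W).
have M_gt0 : 0 < M.
  have [W_lt1|W_ge1] := ltrP W 1.
    have : 0 <= \sum_s w s * x s by apply: sumr_ge0 => s _; rewrite mulr_ge0 // ltW.
    by rewrite /M; lra.
  have -> : M = \sum_s w s * x s by rewrite /M; lra.
  by apply: psumr_wmul_gt0 => //; rewrite -/W; apply/eqP; lra.
rewrite geomeanE // -[leRHS]lnK ?posrE // ler_expR.
have ln_x s : ln (x s) <= ln M + x s / M - 1.
  by have := ln_le_subr1 _ (divr_gt0 (x0 s) M_gt0); rewrite ln_div ?posrE //; lra.
have ln_M : 0 <= ln M + M^-1 - 1.
  have Minv_gt0 : 0 < M^-1 by rewrite invr_gt0.
  by have := ln_le_subr1 _ Minv_gt0; rewrite lnV ?posrE //; lra.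
apply: le_trans (ler_sum _ (fun s _ => ler_wpM2l (w0 s) (ln_x s))) _.
have -> : \sum_s w s * (ln M + x s / M - 1) = ln M - (1 - W) * (ln M + M^-1 - 1).
  rewrite (eq_bigr (fun s => w s * (ln M - 1) + w s * x s / M)); last by move=> s _; ring.
  rewrite big_split /= -!mulr_suml -/W.
  have -> : \sum_s w s * x s = M - (1 - W) by rewrite /M; ring.
  by field; rewrite gt_eqF.
by rewrite gerBl mulr_ge0 // subr_ge0.
Qed.

Lemma geomean_concave w x y t : (forall s, 0 <= w s) -> \sum_s w s <= 1 ->
  (forall s, 0 < x s) -> (forall s, 0 < y s) -> 0 <= t <= 1 ->
  t * geomean w x + (1 - t) * geomean w y
  <= geomean w (fun s => t * x s + (1 - t) * y s).
Proof.
move=> w0 w1 x0 y0 /andP[t0 t1]; set z := fun s => _.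
have z0 s : 0 < z s by rewrite /z; have := x0 s; have := y0 s; nra.
set W := \sum_s w s.
(* the supergradient inequality of [geomean w] at [z] *)
have tangent u : (forall s, 0 < u s) ->
    geomean w u <= geomean w z * (\sum_s w s * (u s / z s) + (1 - W)).
  move=> u0; have -> : geomean w u = geomean w z * geomean w (fun s => u s / z s).
    rewrite -geomeanM => [|s|s]; last 2 first.
    - exact: ltW.
    - by rewrite divr_ge0 // ltW.
    by congr geomean; apply: funext => s; rewrite mulrC divfK ?gt_eqF.
  by rewrite ler_wpM2l ?geomean_ge0 // geomean_le_amean // => s; exact: divr_gt0.
have t1' : 0 <= 1 - t by rewrite subr_ge0.
apply: le_trans (lerD (ler_wpM2l t0 (tangent x x0)) (ler_wpM2l t1' (tangent y y0))) _.
have convex_weights :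
    t * (\sum_s w s * (x s / z s)) + (1 - t) * (\sum_s w s * (y s / z s)) = W.
  rewrite !mulr_sumr -big_split /=; apply: eq_bigr => s _.
  by have := z0 s; rewrite /z => zs; field; rewrite gt_eqF.
set G := geomean w z.
set Sx := \sum_s _ in convex_weights *; set Sy := \sum_s _ in convex_weights *.
have -> : t * (G * (Sx + (1 - W))) + (1 - t) * (G * (Sy + (1 - W)))
    = G * (t * Sx + (1 - t) * Sy + (1 - W)) by ring.
by rewrite convex_weights addrC subrK mulr1.
Qed.

End GeometricMean.

Section Continuity.
Context {R : realType}.

Lemma closed_le_continuous {T : topologicalType} (f g : T -> R) :
  continuous f -> continuous g -> closed [set x | f x <= g x].
Proof.
move=> f_cont g_cont.
have -> : [set x | f x <= g x] = (fun x => f x - g x) @^-1` [set y | y <= 0].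
  by apply/seteqP; split => x /=; rewrite subr_le0.
apply: preimage_closed; last exact: closed_le.
by move=> x _; have fg_cont := continuousB (f_cont x) (g_cont x); exact: fg_cont.
Qed.

Context {S : finType}.

Lemma continuous_geomean_max1 (w : S -> R) :
  continuous (fun x : {ptws S -> R} => geomean w (fun s => Num.max (x s) 1)).
Proof.
have -> : (fun x : {ptws S -> R} => geomean w (fun s => Num.max (x s) 1))
    = fun x => expR (\sum_s w s * ln (Num.max (x s) 1)).
  by apply: funext => x; rewrite geomeanE // => s; rewrite lt_max ltr01 orbT.
suff cont_sum : continuous (fun x : {ptws S -> R} => \sum_s w s * ln (Num.max (x s) 1)).
  by move=> x; exact: continuous_comp (cont_sum x) (@continuous_expR R _).
apply: (@continuous_big _ _ +%R 0 predT add_continuous) => s _ x.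
have cont_ln : {for x, continuous (fun y : {ptws S -> R} => ln (Num.max (y s) 1))}.
  have cont_max := continuous_max (@proj_continuous S (fun=> R) s x) (@cst_continuous _ R 1 x).
  have cont_ln_max : {for Num.max (x s) 1, continuous (@ln R)}.
    by apply: continuous_ln; rewrite lt_max ltr01 orbT.
  exact: continuous_comp cont_max cont_ln_max.
exact: continuousM (@cst_continuous _ R (w s) x) cont_ln.
Qed.

End Continuity.

Section Dotp.
Context {R : realType} {S : finType}.
Implicit Types (p v w : S -> R).

Lemma dotp_le {p v w} : simplex p -> (forall s, v s <= w s) -> dotp p v <= dotp p w.
Proof. by case=> p0 _ vw; apply: ler_sum => s _; exact: ler_wpM2l. Qed.

Lemma dotpDr_cst {p} v c : simplex p -> dotp p (fun s => v s + c) = dotp p v + c.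
Proof.
case=> _ p1; rewrite /dotp; under eq_bigr do rewrite mulrDr.
by rewrite big_split /= -mulr_suml p1 mul1r.
Qed.

Lemma dotp0r p : dotp p (fun=> 0) = 0.
Proof. by rewrite /dotp big1 // => s _; rewrite mulr0. Qed.

End Dotp.

Section RobustMDP.
Context {R : realType} {S A : finType} (lam b : R) (r nu : S -> A -> R)
  (U : S -> A -> set (S -> R)).
Hypotheses (lam_ge0 : 0 <= lam) (lam_lt1 : lam < 1) (b_gt0 : 0 < b)
  (r_ge0 : forall s a, 0 <= r s a) (nu_simplex : forall s, simplex (nu s))
  (U_simplex : forall {s a p}, U s a p -> simplex p)
  (U_argmin : forall s a (v : S -> R),
      exists2 p, U s a p & forall q, U s a q -> dotp p v <= dotp q v)
  (U_argmin_geomean : forall s a (x : S -> R), (forall s', 0 < x s') ->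
      exists2 p, U s a p & forall q, U s a q ->
        geomean (fun s' => lam * p s') x <= geomean (fun s' => lam * q s') x).

Definition worst_case (v : S -> R) s a := setmin (U s a) (fun p => dotp p v).

Definition partition_sum (v : S -> R) s :=
  \sum_a nu s a * expR (b * (r s a + lam * worst_case v s a)).

Lemma worst_case_attained v s a :
  exists2 p, U s a p & worst_case v s a = dotp p v.
Proof. by have [p Up pmin] := U_argmin s a v; exists p => //; exact: setmin_eq. Qed.

Lemma worst_case_le v w s a :
  (forall s, v s <= w s) -> worst_case v s a <= worst_case w s a.
Proof.
move=> vw; have [pv Upv pv_min] := U_argmin s a v.
have [pw Upw ->] := worst_case_attained w s a.
rewrite /worst_case (setmin_eq Upv pv_min).
exact: le_trans (pv_min _ Upw) (dotp_le (U_simplex Upw) vw).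
Qed.

Lemma worst_case_shift v c s a :
  worst_case (fun s => v s + c) s a = worst_case v s a + c.
Proof.
have [p Up pmin] := U_argmin s a v.
rewrite /worst_case (setmin_eq Up pmin) (@setmin_eq _ _ _ _ p) //.
  exact: dotpDr_cst (U_simplex Up).
move=> q Uq; rewrite (dotpDr_cst _ _ (U_simplex Up)) (dotpDr_cst _ _ (U_simplex Uq)).
by rewrite lerD2r pmin.
Qed.

Lemma worst_case0 s a : worst_case (fun=> 0) s a = 0.
Proof. by have [p _ ->] := worst_case_attained (fun=> 0) s a; exact: dotp0r. Qed.

Lemma partition_sum_gt0 v s : 0 < partition_sum v s.
Proof.
have [nu0 _] := nu_simplex s.
by rewrite psumr_wmul_gt0 ?simplex_sum_ne0 // => a; exact: expR_gt0.
Qed.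

Lemma TtilE v s : Ttil lam b r nu U v s = ln (partition_sum v s) / b.
Proof. by rewrite /Ttil (gibbs_variational _ _ _ b_gt0 (nu_simplex s)). Qed.

Lemma Ttil_le v w :
  (forall s, v s <= w s) -> forall s, Ttil lam b r nu U v s <= Ttil lam b r nu U w s.
Proof.
move=> vw s; rewrite !TtilE ler_pM2r ?invr_gt0 // ler_ln ?posrE ?partition_sum_gt0 //.
apply: ler_sum => a _; apply: ler_wpM2l; first by case: (nu_simplex s).
by rewrite ler_expR ler_pM2l // lerD2l ler_wpM2l // worst_case_le.
Qed.

Lemma Ttil_shift v c s :
  Ttil lam b r nu U (fun s => v s + c) s = Ttil lam b r nu U v s + lam * c.
Proof.
rewrite !TtilE.
have -> : partition_sum (fun s => v s + c) s = expR (b * (lam * c)) * partition_sum v s.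
  rewrite /partition_sum mulr_sumr; apply: eq_bigr => a _.
  by rewrite worst_case_shift mulrCA -expRD; congr (_ * expR _); ring.
rewrite lnM ?posrE ?expR_gt0 ?partition_sum_gt0 // expRK.
by field; rewrite gt_eqF.
Qed.

Lemma Ttil0_ge0 s : 0 <= Ttil lam b r nu U (fun=> 0) s.
Proof.
have [nu0 nu1] := nu_simplex s.
rewrite TtilE divr_ge0 ?ln_ge0 ?(ltW b_gt0) // -nu1.
apply: ler_sum => a _; rewrite -[leLHS]mulr1 ler_wpM2l // worst_case0.
by rewrite mulr0 addr0 -expR0 ler_expR mulr_ge0 // ltW.
Qed.

Lemma ttil_expR v s :
  ttil lam b r nu U (fun s => expR (b * v s)) s = expR (b * Ttil lam b r nu U v s).
Proof.
rewrite TtilE mulrC divfK ?gt_eqF // lnK ?posrE ?partition_sum_gt0 //.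
rewrite /ttil /partition_sum; apply: eq_bigr => a _.
have geomE p : \prod_s' powR (expR (b * v s')) (lam * p s') = expR (b * lam * dotp p v).
  rewrite /dotp mulr_sumr expR_sum; apply: eq_bigr => s' _.
  by rewrite /powR gt_eqF ?expR_gt0 // expRK; congr expR; ring.
have [pv Upv pv_min] := U_argmin s a v.
rewrite (@setmin_eq _ _ _ _ pv) // ?geomE.
  rewrite /worst_case (setmin_eq Upv pv_min) -mulrA -expRD.
  by congr (_ * expR _); ring.
by move=> q Uq; rewrite !geomE ler_expR ler_wpM2l ?pv_min // mulr_ge0 // ltW.
Qed.

Lemma Ttil_subsolution_le {vstar v} :
  (forall s, Ttil lam b r nu U vstar s = vstar s) ->
  (forall s, v s <= Ttil lam b r nu U v s) -> forall s, v s <= vstar s.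
Proof. exact: (subsolution_le_fixpoint _ _ Ttil_le Ttil_shift lam_lt1). Qed.

Definition ttil_sel (P : A -> S -> R) (x : S -> R) s :=
  \sum_a nu s a * expR (b * r s a) * geomean (fun s' => lam * P a s') x.

Definition ttil_feasible := [set x : S -> R |
  (forall s, x s <= ttil lam b r nu U x s) /\ (forall s, 1 <= x s)].

Lemma ttil_le_sel P x s :
  (forall a, U s a (P a)) -> ttil lam b r nu U x s <= ttil_sel P x s.
Proof.
move=> UP; apply: ler_sum => a _; apply: ler_wpM2l.
  by rewrite mulr_ge0 ?expR_ge0 //; case: (nu_simplex s).
by apply: setmin_le (UP a) => q _; exact: geomean_ge0.
Qed.

Lemma ttil_sel_attained x s : (forall s', 0 < x s') ->
  exists2 P, (forall a, U s a (P a)) & ttil lam b r nu U x s = ttil_sel P x s.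
Proof.
move=> x_gt0.
have /choice [P P_min] : forall a, exists p, U s a p /\ forall q, U s a q ->
    geomean (fun s' => lam * p s') x <= geomean (fun s' => lam * q s') x.
  by move=> a; have [p Up p_min] := U_argmin_geomean s a x x_gt0; exists p.
exists P => [a|]; first by case: (P_min a).
by apply: eq_bigr => a _; have [UPa Pa_min] := P_min a; rewrite (setmin_eq UPa Pa_min).
Qed.

Lemma ttil_concave x y t : (forall s, 0 < x s) -> (forall s, 0 < y s) -> 0 <= t <= 1 ->
  forall s, t * ttil lam b r nu U x s + (1 - t) * ttil lam b r nu U y s
            <= ttil lam b r nu U (fun s => t * x s + (1 - t) * y s) s.
Proof.
move=> x_gt0 y_gt0 t01 s; have /andP[t0 t1] := t01.
have z_gt0 s' : 0 < t * x s' + (1 - t) * y s'.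
  by have := x_gt0 s'; have := y_gt0 s'; nra.
have [P UP ->] := ttil_sel_attained _ s z_gt0.
have t1' : 0 <= 1 - t by rewrite subr_ge0.
have sel_x := ler_wpM2l t0 (ttil_le_sel _ x _ UP).
have sel_y := ler_wpM2l t1' (ttil_le_sel _ y _ UP).
apply: le_trans (lerD sel_x sel_y) _.
rewrite /ttil_sel !mulr_sumr -big_split /=; apply: ler_sum => a _.
rewrite mulrCA [(1 - t) * _]mulrCA -mulrDr; apply: ler_wpM2l.
  by rewrite mulr_ge0 ?expR_ge0 //; case: (nu_simplex s).
have [p0 p1] := U_simplex (UP a).
apply: geomean_concave => // [s'|]; first by rewrite mulr_ge0.
by rewrite -mulr_sumr p1 mulr1 ltW.
Qed.

Lemma convex_ttil_feasible x y t : ttil_feasible x -> ttil_feasible y -> 0 <= t <= 1 ->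
  ttil_feasible (fun s => t * x s + (1 - t) * y s).
Proof.
move=> [x_sub x_ge1] [y_sub y_ge1] t01; have /andP[t0 t1] := t01.
have pos (z : S -> R) (z_ge1 : forall s, 1 <= z s) s : 0 < z s := lt_le_trans ltr01 (z_ge1 s).
split=> s; last by have := x_ge1 s; have := y_ge1 s; nra.
apply: le_trans _ (ttil_concave _ _ _ (pos _ x_ge1) (pos _ y_ge1) t01 s).
by apply: lerD; apply: ler_wpM2l; rewrite ?subr_ge0.
Qed.

Lemma closed_ttil_feasible : closed (ttil_feasible : set {ptws S -> R}).
Proof.
pose sel := [set sP : S * (A -> S -> R) | forall a, U sP.1 a (sP.2 a)].
(* clamping at 1 is harmless on the feasible set and makes the constraints continuous *)
have -> : ttil_feasible = \bigcap_(s in setT) [set x : {ptws S -> R} | 1 <= x s] `&`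
    \bigcap_(sP in sel) [set x : {ptws S -> R} |
                          x sP.1 <= ttil_sel sP.2 (fun s => Num.max (x s) 1) sP.1].
  apply/seteqP; split=> x /=.
    move=> [x_sub x_ge1]; split=> [s _|[s P] UP /=]; first exact: x_ge1.
    rewrite (_ : (fun s => _) = x); last by apply: funext => s'; exact/max_idPl.
    exact: le_trans (x_sub s) (ttil_le_sel _ _ _ UP).
  move=> [x_ge1 x_sel]; have {}x_ge1 s : 1 <= x s by exact: x_ge1.
  have x_max1 : (fun s => Num.max (x s) 1) = x by apply: funext => s; exact/max_idPl.
  split=> // s; have [P UP ->] := ttil_sel_attained x s (fun s => lt_le_trans ltr01 (x_ge1 s)).
  by have := x_sel (s, P) UP; rewrite /= x_max1.
apply: closedI; apply: closed_bigI.
  move=> s _; apply: closed_le_continuous; first exact: cst_continuous.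
  exact: (@proj_continuous S (fun=> R) s).
move=> [s P] _; apply: closed_le_continuous; first exact: (@proj_continuous S (fun=> R) s).
apply: (@continuous_big _ _ +%R 0 predT add_continuous) => a _ x.
exact: continuousM (@cst_continuous _ R _ x) (continuous_geomean_max1 _ x).
Qed.

Lemma ttil_feasible_le_expR vstar x :
  (forall s, Ttil lam b r nu U vstar s = vstar s) -> ttil_feasible x ->
  forall s, x s <= expR (b * vstar s).
Proof.
move=> vstar_fix [x_sub x_ge1].
pose v s := ln (x s) / b.
have xE : x = fun s => expR (b * v s).
  by apply: funext => s; rewrite /v mulrC divfK ?gt_eqF // lnK // posrE (lt_le_trans ltr01).
have v_sub s : v s <= Ttil lam b r nu U v s.
  by have := x_sub s; rewrite [in ttil _ _ _ _ _ x]xE ttil_expR {1}xE ler_expR ler_pM2l.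
by move=> s; rewrite xE ler_expR ler_pM2l // (Ttil_subsolution_le vstar_fix v_sub).
Qed.

Lemma ttil_feasible_expR_fixpoint vstar :
  (forall s, Ttil lam b r nu U vstar s = vstar s) ->
  ttil_feasible (fun s => expR (b * vstar s)).
Proof.
move=> vstar_fix; split=> s; first by rewrite ttil_expR vstar_fix.
rewrite -expR0 ler_expR mulr_ge0 ?(ltW b_gt0) //.
exact: Ttil_subsolution_le vstar_fix Ttil0_ge0 s.
Qed.

End RobustMDP.

Theorem theorem1 (R : realType) (S A : finType)
  (hS : (0 < #|S|)%N) (hA : (0 < #|A|)%N)
  (lam b : R) (hlam : 0 < lam < 1) (hb : 0 < b)
  (r : S -> A -> R) (hr : forall s a, 0 <= r s a)
  (nu : S -> A -> R) (hnu : forall s, simplex (nu s))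
  (U : S -> A -> set (S -> R))
  (hUsimp : forall s a p, U s a p -> simplex p)
  (hUne : forall s a, U s a !=set0)
  (hUmin1 : forall s a (v : S -> R),
      exists2 p, U s a p & forall q, U s a q -> dotp p v <= dotp q v)
  (hUmin2 : forall s a (x : S -> R), (forall s', 0 < x s') ->
      exists2 p, U s a p & forall q, U s a q ->
        \prod_(s' : S) powR (x s') (lam * p s') <= \prod_(s' : S) powR (x s') (lam * q s'))
  (vstar : S -> R) (hfix : forall s, Ttil lam b r nu U vstar s = vstar s) :
  (* (1) vstar is optimal for max { sum_s exp(b v_s) : v <= T~(v) } *)
  ((forall s, vstar s <= Ttil lam b r nu U vstar s) /\
   (forall v : S -> R, (forall s, v s <= Ttil lam b r nu U v s) ->
      \sum_(s : S) expR (b * v s) <= \sum_(s : S) expR (b * vstar s)))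
  /\
  (* (2) the program max { sum_s x_s : x <= t~(x), x >= 1 } is convex
         (closed convex feasible set) and vstar = log_b of its optimal solution *)
  (let feas := [set x : S -> R | (forall s, x s <= ttil lam b r nu U x s) /\
                                 (forall s, 1 <= x s)] in
   @closed {ptws S -> R} feas /\
   (forall x y (t : R), feas x -> feas y -> 0 <= t <= 1 ->
      feas (fun s => t * x s + (1 - t) * y s)) /\
   (exists xstar, feas xstar /\
      forall x, feas x -> \sum_(s : S) x s <= \sum_(s : S) xstar s) /\
   (forall xstar, feas xstar ->
      (forall x, feas x -> \sum_(s : S) x s <= \sum_(s : S) xstar s) ->
      forall s, vstar s = ln (xstar s) / b)).
Proof.
have [lam_gt0 lam_lt1] := andP hlam; have lam_ge0 := ltW lam_gt0.
have sub_le v : (forall s, v s <= Ttil lam b r nu U v s) -> forall s, v s <= vstar s.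
  exact: Ttil_subsolution_le hfix.
pose xstar s := expR (b * vstar s).
have feas_le x : ttil_feasible lam b r nu U x -> forall s, x s <= xstar s.
  exact: ttil_feasible_le_expR hfix.
have feas_star : ttil_feasible lam b r nu U xstar.
  exact: ttil_feasible_expR_fixpoint hfix.
split.
  split=> [s|v v_sub]; first by rewrite hfix.
  by apply: ler_sum => s _; rewrite ler_expR ler_pM2l // sub_le.
split; first exact: closed_ttil_feasible.
split; first exact: convex_ttil_feasible.
split; first by exists xstar; split=> // x /feas_le x_le; apply: ler_sum.
move=> x x_feas x_max s.
rewrite (eq_of_ler_sum (feas_le _ x_feas) (x_max _ feas_star)) /xstar expRK.
by rewrite mulrC mulKf ?gt_eqF.
Qed.
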